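(* Let $\mathcal C$ be an epireflective subcategory of $\mathbf{Top}$, $X$ a topological space and $A$ a subspace of $X$. Then the epireflection preserves the subspace $A\hookrightarrow X$ if and only if both of the following hold: (1) for all $a_1,a_2\in A$ with $\mathrm{r}_{(A,\mathcal C)}(a_1)\neq\mathrm{r}_{(A,\mathcal C)}(a_2)$ we have $\mathrm{r}_{(X,\mathcal C)}(a_1)\neq\mathrm{r}_{(X,\mathcal C)}(a_2)$; (2) for every $\mathcal C$-closed (resp. $\mathcal C$-open) subset $F$ of $A$ there is a $\mathcal C$-closed (resp. $\mathcal C$-open) subset $E$ of $X$ with $E\cap A=F$.
   Context: An epireflective subcategory $\mathcal C$ of $\mathbf{Top}$ is a full, isomorphism-closed subcategory closed under products and subspaces; each space $X$ has a reflection $\mathrm{r}_{\mathcal C}X\in\mathcal C$ with a continuous surjection $\mathrm{r}_{(X,\mathcal C)}\colon X\to\mathrm{r}_{\mathcal C}X$ through which every continuous map from $X$ into a space of $\mathcal C$ factors uniquely; $\mathrm{r}_{\mathcal C}(f)$ is the induced map. The epireflection preserves the subspace $A\hookrightarrow X$ (inclusion $i$) if $\mathrm{r}_{\mathcal C}(i)\colon\mathrm{r}_{\mathcal C}A\to\mathrm{r}_{\mathcal C}X$ is a homeomorphism onto a subspace of $\mathrm{r}_{\mathcal C}X$. For a space $Z$, a subset is $\mathcal C$-open if it belongs to the topology on $Z$ generated by the sets $f^{-1}(U)$ with $f\colon Z\to Y$ continuous, $Y\in\mathcal C$, $U$ open in $Y$; it is $\mathcal C$-closed if its complement is $\mathcal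 C$-open. *)

From HB Require Import structures.
From mathcomp Require Import all_boot all_algebra all_classical topology.
Set Implicit Arguments. Unset Strict Implicit. Unset Printing Implicit Defensive.
Local Open Scope classical_set_scope.

(* A class of topological spaces (a full subcategory of Top). *)
Definition top_class := topologicalType -> Prop.

Definition homeomorphism (S T : topologicalType) (f : S -> T) : Prop :=
  continuous f /\ exists g : T -> S, continuous g /\ cancel f g /\ cancel g f.

Definition embedding (S T : topologicalType) (f : S -> T) : Prop :=
  exists h : S -> set_type (range f),
    (forall s, set_val (h s) = f s) /\ homeomorphism h.

Definition is_reflection (C : top_class) (X R : topologicalType) (r : X -> R) : Prop :=
  [/\ C R, continuous r, (forall y : R, exists x : X, r x = y) &
      forall (Y : topologicalType) (f : X -> Y), C Y -> continuous f ->
        (exists g : R -> Y, continuous g /\ f = g \o r) /\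
        (forall g1 g2 : R -> Y, continuous g1 -> continuous g2 ->
            g1 \o r = g2 \o r -> g1 = g2)].

Definition epireflective (C : top_class) : Prop :=
  [/\ (forall (S T : topologicalType) (f : S -> T), homeomorphism f -> C S -> C T),
      (forall (I : Type) (T : I -> topologicalType),
          (forall i, C (T i)) -> C (prod_topology T)),
      (forall (T : topologicalType) (A : set T), C T -> C (set_type A)) &
      (forall X : topologicalType, exists (R : topologicalType) (r : X -> R),
          is_reflection C r)].

Definition is_topology_on (Z : Type) (tau : set (set Z)) : Prop :=
  [/\ tau setT,
      (forall U V, tau U -> tau V -> tau (U `&` V)) &
      (forall G : set (set Z), G `<=` tau -> tau (\bigcup_(U in G) U))].

(* C-open: belongs to the topology generated by the preimages f^-1(U) with
   f : Z -> Y continuous, Y in C, U open in Y. *)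
Definition C_open (C : top_class) (Z : topologicalType) (S : set Z) : Prop :=
  forall tau : set (set Z), is_topology_on tau ->
    (forall (Y : topologicalType) (f : Z -> Y) (U : set Y),
        C Y -> continuous f -> open U -> tau (f @^-1` U)) ->
    tau S.

Definition C_closed (C : top_class) (Z : topologicalType) (S : set Z) : Prop :=
  C_open C (~` S).

From HB Require Import structures.
From mathcomp Require Import all_boot all_algebra all_classical topology.
Local Open Scope classical_set_scope.

(* Both conditions transport, through the reflections, to properties of the
   induced map ri : r_C A -> r_C X.  Since r_(A,C) is surjective and
   ri \o r_(A,C) = r_(X,C) on A, condition (1) says exactly that ri is
   injective.  By the universal property, the C-open sets of a space are
   exactly the preimages of open sets of its reflection, so condition (2)
   says that every open set of r_C A is the preimage under ri of an open set
   of r_C X, i.e. that r_C A carries the initial topology of ri.  A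
   continuous injection with this property is an embedding.  The closed and
   open versions of (2) are equivalent by complementation. *)

Lemma open_is_topology (T : topologicalType) : is_topology_on (@open T).
Proof.
split; [exact: openT | exact: openI |].
by move=> G GT; apply: bigcup_open.
Qed.

Lemma C_open_reflectionP {C : top_class} {Z R : topologicalType} {r : Z -> R} :
  is_reflection C r -> forall S : set Z, C_open C S <-> wopen r S.
Proof.
case=> CR r_cont _ r_univ S; split => [S_C_open|[V V_open <-]].
- apply: (S_C_open (@open (initial_topology r))); first exact: open_is_topology.
  move=> Y f U CY f_cont U_open.
  have [[g [g_cont ->]] _] := r_univ Y f CY f_cont.
  by rewrite comp_preimage; exists (g @^-1` U) => //; apply: open_comp.
- by move=> tau _ tau_gen; apply: tau_gen.
Qed.

Lemma C_closed_trace_iff_C_open_trace (C : top_class) (Z X : topologicalType)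
    (f : Z -> X) :
  (forall F : set Z, C_closed C F ->
     exists E : set X, C_closed C E /\ f @^-1` E = F) <->
  (forall F : set Z, C_open C F ->
     exists E : set X, C_open C E /\ f @^-1` E = F).
Proof.
split => trace F F_C.
- have [E [E_C fEF]] : exists E, C_closed C E /\ f @^-1` E = ~` F.
    by apply: trace; rewrite /C_closed setCK.
  by exists (~` E); split; [exact: E_C | rewrite -preimage_setC fEF setCK].
- have [E [E_C fEF]] := trace _ F_C.
  exists (~` E); split; first by rewrite /C_closed setCK.
  by rewrite -preimage_setC fEF setCK.
Qed.

Lemma embeddingP (S T : topologicalType) (f : S -> T) : continuous f ->
  embedding f <-> injective f /\ (forall V : set S, open V -> wopen f V).
Proof.
move=> f_cont; split.
- move=> [h [hE [_ [g [g_cont [hK _]]]]]]; split.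
    by move=> s1 s2; rewrite -!hE => /val_inj /(can_inj hK).
  move=> V /((continuousP g).1 g_cont) [W W_open WgV].
  exists W => //; rewrite predeqE => s /=.
  by rewrite -hE -[W _]/((set_val @^-1` W) (h s)) WgV /= hK.
- move=> [f_inj f_initial].
  have f_range s : f s \in range f by apply: mem_set; exists s.
  pose h s : set_type (range f) := exist _ (f s) (f_range s).
  have f_preim (y : set_type (range f)) : exists s, f s = set_val y.
    by case: y => y y_range; case/set_mem: (y_range) => s _ fsy; exists s.
  pose g y := projT1 (cid (f_preim y)).
  have gK y : f (g y) = set_val y := projT2 (cid (f_preim y)).
  have hK : cancel h g by move=> s; apply: f_inj; rewrite gK.
  exists h; split => //; split.
    apply/continuousP => _ [W W_open <-].
    exact: (proj1 (continuousP f) f_cont).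
  exists g; split; last by split => // y; apply: val_inj; rewrite /= gK.
  apply/continuousP => V /f_initial [W W_open <-].
  by exists W => //; rewrite predeqE => y /=; rewrite gK.
Qed.

Section ReflectionOfSubspace.
Context {C : top_class} {X : topologicalType} {A : set X}.
Context {RA RX : topologicalType} {rA : set_type A -> RA} {rX : X -> RX}.
Context {ri : RA -> RX}.
Hypotheses (rA_refl : is_reflection C rA) (rX_refl : is_reflection C rX).
Hypothesis riE : ri \o rA = rX \o set_val.

Let riE_at a : ri (rA a) = rX (set_val a).
Proof. exact: (congr1 (@^~ a) riE). Qed.

Let rA_surj : forall y, exists a, rA a = y.
Proof. by case: rA_refl. Qed.

Lemma reflection_map_injectiveP :
  injective ri <->
  (forall a1 a2 : set_type A, rA a1 <> rA a2 -> rX (set_val a1) <> rX (set_val a2)).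
Proof.
split => [ri_inj a1 a2 neq_rA eq_rX|separate s1 s2].
  by apply/neq_rA/ri_inj; rewrite !riE_at.
have [[a1 <-] [a2 <-]] := (rA_surj s1, rA_surj s2).
rewrite !riE_at => eq_rX; apply: contrapT => /separate.
by apply.
Qed.

Lemma reflection_map_initialP :
  (forall V : set RA, open V -> wopen ri V) <->
  (forall F : set (set_type A), C_open C F ->
     exists E : set X, C_open C E /\ set_val @^-1` E = F).
Proof.
split => [ri_initial F|trace V V_open].
- move=> /(C_open_reflectionP rA_refl) [V V_open <-].
  have [W W_open <-] := ri_initial V V_open.
  exists (rX @^-1` W); split; first by apply/(C_open_reflectionP rX_refl); exists W.
  by rewrite -comp_preimage -riE comp_preimage.
- have rAV_C_open : C_open C (rA @^-1` V).
    by apply/(C_open_reflectionP rA_refl); exists V.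
  have [E [/(C_open_reflectionP rX_refl) [W W_open <-] rXWV]] := trace _ rAV_C_open.
  exists W => //; rewrite predeqE => s; have [a <-] := rA_surj s.
  by rewrite /= riE_at -[V _]/((rA @^-1` V) a) -rXWV.
Qed.

End ReflectionOfSubspace.

Theorem proposition5p4 (C : top_class) (HC : epireflective C)
  (X : topologicalType) (A : set X)
  (RA : topologicalType) (rA : set_type A -> RA) (HrA : is_reflection C rA)
  (RX : topologicalType) (rX : X -> RX) (HrX : is_reflection C rX)
  (ri : RA -> RX) (Hri_cont : continuous ri)
  (Hri : ri \o rA = rX \o (@set_val X A)) :
  (embedding ri <->
     (forall a1 a2 : set_type A, rA a1 <> rA a2 -> rX (set_val a1) <> rX (set_val a2)) /\
     (forall F : set (set_type A), C_closed C F ->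
        exists E : set X, C_closed C E /\ (@set_val X A) @^-1` E = F)) /\
  (embedding ri <->
     (forall a1 a2 : set_type A, rA a1 <> rA a2 -> rX (set_val a1) <> rX (set_val a2)) /\
     (forall F : set (set_type A), C_open C F ->
        exists E : set X, C_open C E /\ (@set_val X A) @^-1` E = F)).
Proof.
rewrite C_closed_trace_iff_C_open_trace embeddingP //.
rewrite (reflection_map_injectiveP HrA Hri) (reflection_map_initialP HrA HrX Hri).
by split.
Qed.
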